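(* Let $N=[n]$, let $v:2^N\to\mathbb{R}_+$ be a monotone submodular valuation with $v(\emptyset)=0$, and let $X$ be a decision map for $v$. Let $p=(p_1,\dots,p_n)$ be a mixed Nash equilibrium of the pricing game defined by $v$ and $X$. Then for every $i$, $p_i\ge v(\{i\}\mid N\setminus\{i\})$ with probability $1$. Moreover, if $\mathbb{E}[u_i(p)]=0$, then $\Pr[v(\{i\}\mid X(p))>0]=0$.
   Context: Pricing game: $N=[n]$ services, service $i$ controlled by seller $i$. Buyer valuation $v:2^N\to\mathbb{R}_+$, monotone, $v(\emptyset)=0$; submodular means $v(S\cup T)+v(S\cap T)\le v(S)+v(T)$. Marginal value $v(T\mid S)=v(S\cup T)-v(S)$. For $p\in\mathbb{R}^n_+$, $p(S)=\sum_{j\in S}p_j$, $D(v;p)=\arg\max_{S\subseteq N}(v(S)-p(S))$. A decision map is $X:\mathbb{R}^n_+\to2^N$ with $X(p)\in D(v;p)$ for all $p$. Seller $i$'s utility is $u_i(p)=p_i\mathbf{1}\{i\in X(p)\}$. A mixed Nash equilibrium is a vector $p=(p_1,\dots,p_n)$ of independent random variables with values in $\mathbb{R}_+$ such that $\mathbb{E}[u_i(p_i,p_{-i})]\ge\mathbb{E}[u_i(p_i',p_{-i})]$ for every $i$ and every $p_i'\in\mathbb{R}_+$. *)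

From HB Require Import structures.
From mathcomp Require Import all_boot all_order all_algebra.
From mathcomp Require Import all_classical all_reals all_analysis.
Set Implicit Arguments. Unset Strict Implicit. Unset Printing Implicit Defensive.
Import Order.TTheory GRing.Theory Num.Theory.
Local Open Scope ring_scope.
Local Open Scope classical_set_scope.

Section Pricing.
Variables (R : realType) (n : nat).

Definition valuation := {set 'I_n} -> R.
Definition prices := 'I_n -> R.

Definition monotone_val (v : valuation) :=
  forall S T : {set 'I_n}, S \subset T -> v S <= v T.
Definition nonneg_val (v : valuation) := forall S, 0 <= v S.
Definition submodular (v : valuation) :=
  forall S T : {set 'I_n}, v (S :|: T) + v (S :&: T) <= v S + v T.

Definition marginal (v : valuation) (T S : {set 'I_n}) : R := v (S :|: T) - v S.

Definition pcost (p : prices) (S : {set 'I_n}) : R := \sum_(j in S) p j.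

Definition nonneg_prices (p : prices) := forall j, 0 <= p j.

Definition in_demand (v : valuation) (p : prices) (S : {set 'I_n}) :=
  forall T : {set 'I_n}, v T - pcost p T <= v S - pcost p S.

Definition decision_map (v : valuation) (X : prices -> {set 'I_n}) :=
  forall p, nonneg_prices p -> in_demand v p (X p).

Definition util (X : prices -> {set 'I_n}) (i : 'I_n) (p : prices) : R :=
  if i \in X p then p i else 0.

Definition deviate (p : prices) (i : 'I_n) (q : R) : prices :=
  fun j => if j == i then q else p j.

End Pricing.

(* Mutual independence of the random variables p_1, ..., p_n (product rule
   for every family of Borel sets; taking B j = setT recovers subfamilies). *)
Definition independent_rvs {d} {T : measurableType d} {R : realType} {n : nat}
  (P : probability T R) (p : 'I_n -> T -> R) :=
  forall B : 'I_n -> set R, (forall j, measurable (B j)) ->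
    P (\bigcap_(j in [set: 'I_n]) (p j @^-1` B j)) =
    (\prod_(j < n) P (p j @^-1` B j))%E.

(* Mixed Nash equilibrium of the pricing game (v, X): p is a vector of
   independent nonnegative random variables on a probability space, such that
   all utilities involved are measurable (so the expectations are defined) and
   no unilateral deviation to a deterministic price q >= 0 increases the
   expected utility. *)
Definition mixed_NE {d} {T : measurableType d} {R : realType} {n : nat}
  (P : probability T R) (X : prices R n -> {set 'I_n}) (p : 'I_n -> T -> R) :=
  (forall j, measurable_fun setT (p j)) /\
  (forall j t, 0 <= p j t) /\
  independent_rvs P p /\
  (forall i, measurable_fun setT (fun t => util X i (fun j => p j t))) /\
  (forall i q, 0 <= q ->
      measurable_fun setT (fun t => util X i (deviate (fun j => p j t) i q))) /\
  (forall i q, 0 <= q ->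
          (\int[P]_t (util X i (deviate (fun j => p j t) i q))%:E
           <= \int[P]_t (util X i (fun j => p j t))%:E)%E).

From HB Require Import structures.
From mathcomp Require Import all_boot all_order all_algebra.
From mathcomp Require Import all_classical all_reals all_analysis.
From mathcomp Require Import measurable_realfun ring lra.
Set Implicit Arguments. Unset Strict Implicit. Unset Printing Implicit Defensive.
Import Order.TTheory GRing.Theory Num.Theory.
Local Open Scope ring_scope.
Local Open Scope classical_set_scope.

(* Write [threshold_gt v i x a] when the buyer, facing the prices x_{-i} of the
   other services, strictly prefers some bundle containing i at price a for i
   to every bundle without i.  This event depends on x_{-i} only; i is bought
   whenever x_i < a, and threshold_gt holds whenever i is bought at x_i > a.
   As p_i is independent of p_{-i}, deviating to a fixed price q < a earns
   seller i at least q * P(threshold_gt a).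
   If E[u_i] = 0, every event threshold_gt a with a > 0 is therefore null, and
   v({i} | X(p)) > 0 puts p in one of them.
   Let m = v({i} | N \ {i}).  By submodularity a price below m is always
   accepted, so E[u_i] >= m.  If P(p_i <= c) = alpha > 0 for some c < m, cut
   (c, v(N)] into intervals of length delta: on each of them seller i earns at
   most the right end b, and only on the event threshold_gt (b - delta), which
   is independent of p_i and, by the deviation bound, has probability at most
   (E[u_i] + 2 delta) / b.  Summing, E[u_i] <= alpha c + (1 - alpha)
   (E[u_i] + 2 delta), which contradicts E[u_i] >= m when delta is small. *)

Section Demand.
Variables (R : realType) (n : nat) (v : valuation R n).
Implicit Types (x : prices R n) (S : {set 'I_n}) (i : 'I_n).

Definition threshold_gt i x (a : R) : Prop :=
  exists2 S : {set 'I_n}, i \in S & forall S', i \notin S' ->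
    a < v S - pcost x (S :\ i) - (v S' - pcost x S').

Lemma pcost_setD1 x i S : i \in S -> pcost x S = x i + pcost x (S :\ i).
Proof. by move=> iS; rewrite /pcost (big_setD1 i iS). Qed.

Lemma pcost_deviate x i q S : i \notin S -> pcost (deviate x i q) S = pcost x S.
Proof.
move=> iS; apply: eq_bigr => j jS; rewrite /deviate; case: eqP => // ji.
by move: iS; rewrite -ji jS.
Qed.

Lemma threshold_gt_deviate i x q a :
  threshold_gt i (deviate x i q) a <-> threshold_gt i x a.
Proof.
by split=> -[S iS H]; exists S => // S' iS'; have := H S' iS';
  rewrite !pcost_deviate // setD11.
Qed.

Lemma deviate_ge0 x i q : nonneg_prices x -> 0 <= q -> nonneg_prices (deviate x i q).
Proof. by move=> x0 q0 j; rewrite /deviate; case: eqP. Qed.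

Lemma deviate_at x i q : deviate x i q i = q.
Proof. by rewrite /deviate eqxx. Qed.

Lemma marginal_compl_le i S : submodular v -> i \notin S ->
  marginal v [set i] (~: [set i]) <= marginal v [set i] S.
Proof.
move=> sv iS; rewrite /marginal !(finset.setUC _ [set i]) finset.setUCr -/(i |: S).
have cupT : (i |: S) :|: ~: [set i] = finset.setT.
  by apply/setP => j; rewrite !inE; case: (j == i); rewrite ?orbT.
have capS : (i |: S) :&: ~: [set i] = S.
  by apply/setP => j; rewrite !inE; case: eqVneq => [->|]; rewrite ?(negbTE iS) ?andbT.
by have := sv (i |: S) (~: [set i]); rewrite cupT capS; lra.
Qed.

Variable X : prices R n -> {set 'I_n}.

Lemma util_ge0 i x : nonneg_prices x -> 0 <= util X i x.
Proof. by move=> x0; rewrite /util; case: ifP. Qed.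

Hypothesis dm : decision_map v X.

Lemma mem_decision_lt_threshold i x a : nonneg_prices x ->
  x i < a -> threshold_gt i x a -> i \in X x.
Proof.
move=> x0 xa [S iS H]; apply/negPn/negP => iX.
by have := H _ iX; have := dm x0 S; rewrite (pcost_setD1 x iS); lra.
Qed.

Lemma threshold_gt_mem_decision i x a : nonneg_prices x ->
  i \in X x -> a < x i -> threshold_gt i x a.
Proof.
move=> x0 iX ax; exists (X x) => // S' iS'.
by have := dm x0 S'; rewrite (pcost_setD1 x iX); lra.
Qed.

Lemma decision_price_le_setT i x : nonneg_val v -> monotone_val v ->
  nonneg_prices x -> i \in X x -> x i <= v finset.setT.
Proof.
move=> v0 mv x0 iX; have := dm x0 (X x :\ i); rewrite (pcost_setD1 x iX).
by have := mv (X x) finset.setT (finset.subsetT _); have := v0 (X x :\ i); lra.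
Qed.

Lemma threshold_gt_lt_marginal i x a : nonneg_prices x -> 0 <= a ->
  a < marginal v [set i] (X x) -> threshold_gt i x a.
Proof.
rewrite /marginal finset.setUC -/(i |: X x) => x0 a0 am.
have iX : i \notin X x.
  apply: contraTN am => iX.
  have -> : i |: X x = X x by apply/finset.setUidPr; rewrite finset.sub1set.
  by rewrite subrr -leNgt.
exists (i |: X x); first exact: setU11.
by move=> S' _; rewrite setU1K //; have := dm x0 S'; lra.
Qed.

Lemma marginal_le_price i x : nonneg_prices x ->
  i \notin X x -> marginal v [set i] (X x) <= x i.
Proof.
rewrite /marginal finset.setUC -/(i |: X x) => x0 iX.
by have := dm x0 (i |: X x); rewrite (pcost_setD1 x (setU11 _ _)) setU1K //; lra.
Qed.

Lemma mem_decision_lt_marginal_compl i x : submodular v -> nonneg_prices x ->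
  x i < marginal v [set i] (~: [set i]) -> i \in X x.
Proof.
move=> sv x0; apply: contraLR => iX; rewrite -leNgt.
exact: le_trans (marginal_compl_le sv iX) (marginal_le_price x0 iX).
Qed.

End Demand.

Section Independence.
Context d (T : measurableType d) (R : realType) (n : nat).
Variables (P : probability T R) (p : 'I_n -> T -> R).
Hypotheses (mp : forall j, measurable_fun setT (p j)) (ind : independent_rvs P p).

Let rect (B : 'I_n -> set R) := \bigcap_(j in [set: 'I_n]) (p j @^-1` B j).

(* Generators of the sigma-algebra of the random variables p_j, j != i. *)
Definition rects_without (i : 'I_n) : set (set T) :=
  [set E | exists2 B : 'I_n -> set R,
     (forall j, measurable (B j)) /\ B i = setT & E = rect B].

Lemma measurable_rect B : (forall j, measurable (B j)) -> measurable (rect B).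
Proof.
move=> mB; apply: fin_bigcap_measurable; first exact: finite_finset.
by move=> j _; rewrite -[X in measurable X]setTI; exact: mp.
Qed.

Lemma rects_without_setI_closed i : setI_closed (rects_without i).
Proof.
move=> _ _ [B [mB Bi] ->] [C [mC Ci] ->].
exists (fun j => B j `&` C j).
  by split=> [j|]; [exact: measurableI|rewrite Bi Ci setTI].
apply/seteqP; split=> t /=; first by move=> [H1 H2] j _; split; [exact: H1|exact: H2].
by move=> H; split=> j jT; have [] := H j jT.
Qed.

Lemma independent_rect i (J : set R) B : measurable J ->
  (forall j, measurable (B j)) -> B i = setT ->
  P (p i @^-1` J `&` rect B) = (P (p i @^-1` J) * P (rect B))%E.
Proof.
move=> mJ mB Bi; pose B' j := if j == i then J else B j.
have mB' j : measurable (B' j) by rewrite /B'; case: eqP.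
have -> : p i @^-1` J `&` rect B = rect B'.
  apply/seteqP; split=> t /=.
    by move=> [Jt H] j _; rewrite /B'; case: eqP => [->//|_]; exact: H.
  move=> H; split; first by have := H i I; rewrite /B' eqxx.
  by move=> j _; have := H j I; rewrite /B'; case: eqP => [->|//]; rewrite Bi.
rewrite /rect !ind // (bigD1 i) //= [in RHS](bigD1 i) //= Bi preimage_setT.
rewrite probability_setT mul1e /B' eqxx; congr (_ * _)%E.
by apply: eq_bigr => j /negPf ->.
Qed.

Lemma independent_without i (J : set R) : measurable J ->
  forall S, <<s rects_without i >> S ->
    measurable S /\ P (p i @^-1` J `&` S) = (P (p i @^-1` J) * P S)%E.
Proof.
move=> mJ; have mA : measurable (p i @^-1` J).
  by rewrite -[X in measurable X]setTI; exact: mp.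
have finA := fin_num_measure P _ mA.
apply: (@dynkin_induction _ (g_sigma_algebraType (rects_without i))) => //.
- exact: rects_without_setI_closed.
- by split; [exact: measurableT|rewrite setIT probability_setT mule1].
- move=> _ [B [mB Bi] ->].
  by split; [exact: measurable_rect|exact: independent_rect].
- move=> S _ [mS HS]; split; first exact: measurableC.
  have finS := fin_num_measure P _ mS.
  rewrite probability_setC // -setDE measureD // ?ltey_eq ?finA //.
  transitivity (P (p i @^-1` J) - P (p i @^-1` J) * P S)%E; first by rewrite -HS.
  rewrite -(fineK finA) -(fineK finS) -!EFinM -!EFinB; congr (_%:E); ring.
- move=> F _ tF HF; have mF k : d.-measurable (F k : set T) by case: (HF k).
  split; first exact: bigcupT_measurable.
  rewrite setI_bigcupr measure_bigcup; last 2 first.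
  + by move=> k _; exact: measurableI.
  + by move=> k l _ _ [t [[_ Fk] [_ Fl]]]; apply: tF => //; exists t.
  rewrite measure_bigcup //= -(fineK finA) -nneseriesZl; last by [].
  by apply: eq_eseriesr => k _; have [_ ->] := HF k; rewrite fineK.
Qed.

Lemma measurable_without i j : j != i ->
  measurable_fun (setT : set (g_sigma_algebraType (rects_without i))) (p j).
Proof.
move=> ji _ Y mY; rewrite setTI; apply: sub_sigma_algebra.
exists (fun k => if k == j then Y else setT).
  by split=> [k|]; [case: eqP|rewrite eq_sym (negbTE ji)].
apply/seteqP; split=> t /=; first by move=> Yt k _; case: eqP => [->//|].
by move=> H; have := H j I; rewrite eqxx.
Qed.

Lemma measurable_pcost_without i (S : {set 'I_n}) : i \notin S ->
  measurable_fun (setT : set (g_sigma_algebraType (rects_without i)))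
    (fun t => pcost (fun j => p j t) S).
Proof.
move=> iS; rewrite /pcost; under eq_fun do rewrite big_mkcond /=.
apply: measurable_sum => j; case: (boolP (j \in S)) => jS; last exact: measurable_cst.
by apply: measurable_without; apply: contraNneq iS => <-.
Qed.

Definition threshold_event (v : valuation R n) i a : set T :=
  [set t | threshold_gt v i (fun j => p j t) a].

Lemma threshold_event_without (v : valuation R n) i a :
  <<s rects_without i >> (threshold_event v i a).
Proof.
pose T' := g_sigma_algebraType (rects_without i).
have -> : threshold_event v i a =
  \bigcup_(S in [set S : {set 'I_n} | i \in S])
    \bigcap_(S' in [set S' : {set 'I_n} | i \notin S'])
      [set t | a < v S - pcost (fun j => p j t) (S :\ i) -
                   (v S' - pcost (fun j => p j t) S')].
  by apply/seteqP; split=> t /= [S iS H]; exists S.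
apply: (@fin_bigcup_measurable _ T'); first exact: finite_finset.
move=> S iS; apply: (@fin_bigcap_measurable _ T'); first exact: finite_finset.
move=> S' iS'.
have mS : measurable_fun (setT : set T') (fun t => pcost (fun j => p j t) (S :\ i)).
  by apply: measurable_pcost_without; rewrite setD11.
have mS' := measurable_pcost_without iS'.
have := measurable_funB (measurable_funB (measurable_cst (v S)) mS)
  (measurable_funB (measurable_cst (v S')) mS') measurableT
  (measurable_itv `]a, +oo[%R); rewrite setTI.
by congr measurable; apply/seteqP; split=> t /=; rewrite in_itv /= andbT.
Qed.

Lemma measurable_threshold_event v i a : measurable (threshold_event v i a).
Proof.
by have [] := independent_without measurableT (@threshold_event_without v i a).
Qed.

Lemma independent_threshold_event v i a (J : set R) : measurable J ->
  P (p i @^-1` J `&` threshold_event v i a) =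
  (P (p i @^-1` J) * P (threshold_event v i a))%E.
Proof.
by move=> mJ; have [] := independent_without mJ (@threshold_event_without v i a).
Qed.

End Independence.

Section Buckets.
Variables (R : realType) (c delta : R).

Definition bucket (r : nat) : set R := `]c + r%:R * delta, c + r.+1%:R * delta].

Lemma bucket_gt r x : 0 <= delta -> bucket r x -> c < x.
Proof.
move=> d0; rewrite /bucket /= in_itv /= => /andP[+ _].
by apply: le_lt_trans; rewrite lerDl mulr_ge0.
Qed.

Lemma trivIset_bucket_preimage (T : Type) (f : T -> R) :
  0 < delta -> trivIset setT (fun r => f @^-1` bucket r).
Proof.
move=> d0 r s _ _ [x []]; rewrite /bucket /= !in_itv /=.
move=> /andP[r1 r2] /andP[s1 s2].
have lt_nat m k : c + m%:R * delta < c + k%:R * delta -> (m < k)%N.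
  by rewrite ltrD2l (ltr_pM2r d0) ltr_nat.
apply/eqP; rewrite eqn_leq; apply/andP; split; rewrite -ltnS; apply: lt_nat.
- exact: lt_le_trans r1 s2.
- exact: lt_le_trans s1 r2.
Qed.

Lemma exists_bucket (K : nat) x : 0 < delta -> c < x -> x <= c + K%:R * delta ->
  exists2 r, (r < K)%N & bucket r x.
Proof.
move=> d0 cx; elim: K => [|K IH] xK; first by move: xK; rewrite mul0r addr0; lra.
have [xK'|xK'] := lerP x (c + K%:R * delta).
  by have [r rK Hr] := IH xK'; exists r => //; exact: ltnW.
by exists K => //; rewrite /bucket /= in_itv /= xK' xK.
Qed.

End Buckets.

Section IndicatorIntegrals.
Context d (T : measurableType d) (R : realType) (mu : {measure set T -> \bar R}).

Lemma measurable_scale_indic (k : R) (E : set T) : measurable E ->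
  measurable_fun setT (fun t => k * \1_E t).
Proof.
move=> mE; apply: measurable_funM; first exact: measurable_cst.
exact: measurable_indic.
Qed.

Lemma integral_scale_indic (k : R) (E : set T) : measurable E -> 0 <= k ->
  (\int[mu]_t (k * \1_E t)%:E = k%:E * mu E)%E.
Proof.
move=> mE k0; under eq_integral do rewrite EFinM.
rewrite ge0_integralZl_EFin //; first by rewrite integral_indic // setIT.
exact/measurable_EFinP/measurable_indic.
Qed.

Lemma integral_sum_scale_indic (c : R) (C : set T) (w : nat -> R) (F : nat -> set T) K :
  measurable C -> (forall r, measurable (F r)) -> 0 <= c -> (forall r, 0 <= w r) ->
  (\int[mu]_t (c * \1_C t + \sum_(r < K) w r * \1_(F r) t)%:E =
     c%:E * mu C + \sum_(r < K) (w r)%:E * mu (F r))%E.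
Proof.
move=> mC mF c0 w0; have ge0 k E t : 0 <= k -> 0 <= k * \1_E t :> R.
  by move=> k0; rewrite indicE mulr_ge0.
under eq_integral do rewrite EFinD -sumEFin.
rewrite ge0_integralD //.
- rewrite integral_scale_indic // ge0_integral_sum //.
  + by congr (_ + _)%E; apply: eq_bigr => r _; rewrite integral_scale_indic.
  + by move=> r; exact/measurable_EFinP/measurable_scale_indic.
  + by move=> r t _; rewrite lee_fin ge0.
- by move=> t _; rewrite lee_fin ge0.
- exact/measurable_EFinP/measurable_scale_indic.
- by move=> t _; apply: sume_ge0 => r _; rewrite lee_fin ge0.
- by apply: emeasurable_sum => r; exact/measurable_EFinP/measurable_scale_indic.
Qed.

End IndicatorIntegrals.

Lemma exists_nat_step (R : realType) (c delta w : R) : 0 < delta ->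
  exists K : nat, w <= c + K%:R * delta.
Proof.
move=> d0; exists (Num.bound `|(w - c) / delta|).
have := archi_boundP (normr_ge0 ((w - c) / delta)).
by move=> /(le_lt_trans (ler_norm _)) /ltW; rewrite ler_pdivrMr //; lra.
Qed.

Lemma measure_lt_neq0 d (T : measurableType d) (R : realType)
    (mu : {measure set T -> \bar R}) (f : T -> R) (m : R) :
  measurable_fun setT f -> mu [set t | f t < m] != 0%E ->
  exists2 c, c < m & mu [set t | f t <= c] != 0%E.
Proof.
move=> mf Pm; apply: contrapT => none; move/eqP: Pm; apply.
have mle (c : R) : measurable [set t | f t <= c].
  by rewrite -[X in measurable X]setTI -preimage_itvNyc; exact: mf.
apply/negligibleP.
  by rewrite -[X in measurable X]setTI -preimage_itvNyo; exact: mf.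
apply: (negligibleS _
  (negligible_bigcup (F := fun k => [set t | f t <= m - k.+1%:R^-1]) _)).
  move=> t /= ftm; have [k km] := ltr_add_invr ftm.
  by exists k => //=; rewrite lerBrDr ltW.
move=> k; apply/negligibleP => //; apply/eqP/negPn/negP => Pk; apply: none.
by exists (m - k.+1%:R^-1) => //; rewrite ltrBlDr ltrDl invr_gt0.
Qed.

Section Equilibrium.
Context d (T : measurableType d) (R : realType) (n : nat).
Variables (P : probability T R) (v : valuation R n).
Variables (X : prices R n -> {set 'I_n}) (p : 'I_n -> T -> R).
Hypotheses (dm : decision_map v X) (NE : mixed_NE P X p).
Variable i : 'I_n.

Let mp : forall j, measurable_fun setT (p j) := NE.1.
Let p0 t : nonneg_prices (fun j => p j t) := fun j => NE.2.1 j t.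
Let ind : independent_rvs P p := NE.2.2.1.
Let mutil := NE.2.2.2.1 i.
Let mdev := NE.2.2.2.2.1 i.
Let NE_dev := NE.2.2.2.2.2 i.

Let U := (\int[P]_t (util X i (fun j => p j t))%:E)%E.
Let U_ge0 : (0 <= U)%E.
Proof. by apply: integral_ge0 => t _; rewrite lee_fin util_ge0. Qed.

Let Ev a := threshold_event p v i a.
Let mEv a : measurable (Ev a) := measurable_threshold_event mp ind v i a.

Lemma util_ge_threshold q a : 0 <= q -> q < a ->
  (q%:E * P (Ev a) <= U)%E.
Proof.
move=> q0 qa; apply: le_trans (NE_dev q0).
rewrite -(integral_scale_indic _ (mEv a) q0).
apply: ge0_le_integral => //.
- by move=> t _; rewrite lee_fin indicE mulr_ge0.
- exact/measurable_EFinP/measurable_scale_indic/mEv.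
- exact/measurable_EFinP/mdev.
move=> t _; rewrite lee_fin indicE; have x0 := deviate_ge0 i (p0 t) q0.
case: (boolP (t \in _)) => [/set_mem Et|_]; last by rewrite mulr0 util_ge0.
have Eq : threshold_gt v i (deviate (fun j => p j t) i q) a.
  exact/threshold_gt_deviate.
have xa : deviate (fun j => p j t) i q i < a by rewrite deviate_at.
by rewrite mulr1 /util (mem_decision_lt_threshold dm x0 xa Eq) deviate_at.
Qed.

Lemma util_eq0_marginal_negligible : U = 0%E ->
  P.-negligible [set t | 0 < marginal v [set i] (X (fun j => p j t))].
Proof.
move=> U0; apply: (negligibleS _ (negligible_bigcup
   (F := fun k => Ev k.+1%:R^-1) _)).
  move=> t /= mt; have [k] := ltr_add_invr mt; rewrite add0r => km.
  exists k => //; rewrite /Ev /threshold_event /=.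
  have a0 : 0 <= k.+1%:R^-1 :> R by rewrite invr_ge0.
  exact: (threshold_gt_lt_marginal dm (p0 t) a0 km).
move=> k; apply/negligibleP; first exact: mEv.
set a : R := k.+1%:R^-1; have a0 : 0 < a by rewrite invr_gt0.
have q0 : 0 <= a / 2 by lra.
have qa : a / 2 < a by lra.
have := util_ge_threshold q0 qa; rewrite U0 pmule_rle0 ?lte_fin; last lra.
by move=> Pk; apply/eqP; rewrite eq_le Pk measure_ge0.
Qed.

Lemma util_ge_lt_marginal q : submodular v -> 0 <= q ->
  q < marginal v [set i] (~: [set i]) -> (q%:E <= U)%E.
Proof.
move=> sv q0 qm; apply: le_trans (NE_dev q0).
rewrite -[leLHS]mule1 -(probability_setT P) -integral_cst //.
apply: ge0_le_integral => //; first exact/measurable_EFinP/mdev.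
move=> t _; have x0 := deviate_ge0 i (p0 t) q0.
have xm : deviate (fun j => p j t) i q i < marginal v [set i] (~: [set i]).
  by rewrite deviate_at.
by rewrite lee_fin /util (mem_decision_lt_marginal_compl dm sv x0 xm) deviate_at.
Qed.

Lemma util_fin_num : nonneg_val v -> monotone_val v -> U \is a fin_num.
Proof.
move=> v0 mv; rewrite ge0_fin_numE //.
apply: (le_lt_trans _ (ltry (v finset.setT))).
rewrite -[leRHS]mule1 -(probability_setT P) -integral_cst //.
apply: ge0_le_integral => //.
- by move=> t _; rewrite lee_fin util_ge0.
- exact/measurable_EFinP.
move=> t _; rewrite lee_fin /util; case: ifP => // iX.
by have := decision_price_le_setT dm v0 mv (p0 t) iX.
Qed.

Let mpi (B : set R) : measurable B -> measurable (p i @^-1` B).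
Proof. by move=> mB; rewrite -[X in measurable X]setTI; exact: mp. Qed.

Let mle c : measurable [set t | p i t <= c].
Proof. by rewrite -preimage_itvNyc; exact: mpi. Qed.

Section LowPrice.
Hypotheses (v0 : nonneg_val v) (mv : monotone_val v).
Variables (c delta : R) (K : nat).
Hypotheses (c0 : 0 <= c) (d0 : 0 < delta).
Hypothesis cK : v finset.setT <= c + K%:R * delta.

Let low := [set t | p i t <= c].
Let A r := p i @^-1` bucket c delta r.
Let a r := c + r%:R * delta.
Let E r := Ev (a r).

Let mlow : measurable low := mle c.
Let mA r : measurable (A r) := mpi (measurable_itv _).
Let a_ge0 r : 0 <= a r.
Proof. by rewrite addr_ge0 // mulr_ge0 // ltW. Qed.

Lemma util_le_bucket_indic t : util X i (fun j => p j t) <=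
  c * \1_low t + \sum_(r < K) a r.+1 * \1_(A r `&` E r) t.
Proof.
have term_ge0 r : 0 <= a r.+1 * \1_(A r `&` E r) t by rewrite indicE mulr_ge0.
have sum_ge0 : 0 <= \sum_(r < K) a r.+1 * \1_(A r `&` E r) t.
  by apply: sumr_ge0 => r _.
rewrite /util; case: ifP => iX; last by rewrite addr_ge0 // indicE mulr_ge0.
have [pc|cp] := lerP (p i t) c.
  by rewrite indicE (mem_set (pc : low t)) mulr1; lra.
have pK := le_trans (decision_price_le_setT dm v0 mv (p0 t) iX) cK.
have [r rK Ar] := exists_bucket d0 cp pK.
move: (Ar); rewrite /bucket /= in_itv /= => /andP[ar ar1].
have Er : E r t := threshold_gt_mem_decision dm (p0 t) iX ar.
have ArEr : (A r `&` E r) t by [].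
rewrite (bigD1 (Ordinal rK)) //= [\1_(A r `&` E r) t]indicE (mem_set ArEr) mulr1.
have : 0 <= \sum_(s < K | s != Ordinal rK) a s.+1 * \1_(A s `&` E s) t.
  by apply: sumr_ge0 => s _.
have : 0 <= c * \1_low t by rewrite indicE mulr_ge0.
by rewrite /a; lra.
Qed.

Lemma util_le_bucket_sum :
  (U <= c%:E * P low + \sum_(r < K) (a r.+1)%:E * P (A r `&` E r))%E.
Proof.
have mAE r : measurable (A r `&` E r) by apply: measurableI; [exact: mA|exact: mEv].
rewrite -(@integral_sum_scale_indic _ _ _ P c low (fun r => a r.+1)
  (fun r => A r `&` E r)) //; apply: ge0_le_integral => //.
- by move=> t _; rewrite lee_fin util_ge0.
- exact/measurable_EFinP.
- apply/measurable_EFinP/measurable_funD; first exact: measurable_scale_indic.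
  by apply: measurable_sum => r; exact: measurable_scale_indic.
- by move=> t _; rewrite lee_fin util_le_bucket_indic.
Qed.

Let u := fine U.
Let Uu : U = u%:E := esym (fineK (util_fin_num v0 mv)).
Let pr (S : set T) := fine (P S).
Let probE S : measurable S -> P S = (pr S)%:E.
Proof. by move=> mS; rewrite fineK // fin_num_measure. Qed.

Lemma bucket_threshold_le r : a r.+1 * pr (E r) <= u + 2 * delta.
Proof.
have E0 : 0 <= pr (E r) by rewrite fine_ge0.
have E1 : pr (E r) <= 1.
  by rewrite -lee_fin -probE; [exact: probability_le1 (mEv _)|exact: mEv].
have u0 : 0 <= u by exact: fine_ge0.
have aS : a r.+1 = a r + delta by rewrite /a -natr1 mulrDl mul1r addrA.
rewrite aS; have [da|ad] := lerP delta (a r); last by have := a_ge0 r; nra.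
have q0 : 0 <= a r - delta by lra.
have qa : a r - delta < a r by have := d0; lra.
have := util_ge_threshold q0 qa; rewrite (probE (mEv _)) Uu -EFinM lee_fin.
by nra.
Qed.

Lemma sum_bucket_prob_le : \sum_(r < K) pr (A r) <= 1 - pr low.
Proof.
rewrite -lee_fin -sumEFin EFinB -probE //.
under eq_bigr do rewrite -probE //.
rewrite -measure_bigsetU //; last exact: trivIset_bucket_preimage.
rewrite -probability_setC //; apply: le_measure; rewrite ?inE.
- by apply: bigsetU_measurable => r _; exact: mA.
- exact: measurableC.
move=> t; rewrite -bigcup_mkord => -[r _ Ar]; apply/negP; rewrite -ltNge.
exact: bucket_gt (ltW d0) Ar.
Qed.

Lemma util_low_price_le : pr low * u <= pr low * c + 2 * delta.
Proof.
have indep r : P (A r `&` E r) = (P (A r) * P (E r))%E.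
  have mJ := measurable_itv `]a r, a r.+1]%R.
  by have := independent_threshold_event mp ind v i (a r) mJ.
have ub : u <= c * pr low + \sum_(r < K) a r.+1 * (pr (A r) * pr (E r)).
  have := util_le_bucket_sum; rewrite Uu (probE mlow) -lee_fin EFinD EFinM -sumEFin.
  by under eq_bigr do rewrite indep (probE (mA _)) (probE (mEv _)) -!EFinM.
have sum_le : \sum_(r < K) a r.+1 * (pr (A r) * pr (E r)) <=
    (u + 2 * delta) * \sum_(r < K) pr (A r).
  rewrite mulr_sumr; apply: ler_sum => r _.
  rewrite mulrCA [_ * pr (A r)]mulrC ler_wpM2l ?bucket_threshold_le //.
  by rewrite fine_ge0.
have al0 : 0 <= pr low by rewrite fine_ge0.
have u0 : 0 <= u by exact: fine_ge0.
have ud : 0 <= u + 2 * delta by have := d0; lra.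
have := ler_wpM2l ud sum_bucket_prob_le.
have := mulr_ge0 (ltW d0) al0.
by lra.
Qed.

End LowPrice.

Lemma price_lt_marginal_eq0 : nonneg_val v -> monotone_val v -> submodular v ->
  P [set t | p i t < marginal v [set i] (~: [set i])] = 0%E.
Proof.
move=> v0 mv sv; set m := marginal v [set i] (~: [set i]).
apply/eqP; apply: contraT => /(measure_lt_neq0 (mp i)) [c cm Pc].
have c0 : 0 <= c.
  apply: contraNT Pc; rewrite -ltNge => c0.
  suff -> : [set t | p i t <= c] = set0 by rewrite measure0.
  by apply/seteqP; split=> // t /=; have := p0 t i; lra.
set al := fine (P [set t | p i t <= c]).
have Pal : P [set t | p i t <= c] = al%:E by rewrite fineK // fin_num_measure.
have al0 : 0 < al.
  rewrite lt_def -lee_fin -Pal measure_ge0 andbT.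
  apply: contra Pc => /eqP al0; apply/eqP.
  by transitivity al%:E; [exact: Pal|rewrite al0].
set delta := al * (m - c) / 8.
have d0 : 0 < delta by rewrite divr_gt0 // mulr_gt0 // subr_gt0.
have [K cK] := exists_nat_step c (v finset.setT) d0.
have := util_low_price_le v0 mv c0 d0 cK.
have m0 : 0 <= (c + m) / 2 by lra.
have cmm : (c + m) / 2 < m by lra.
have := util_ge_lt_marginal sv m0 cmm.
have mc : 0 < m - c by rewrite subr_gt0.
have := mulr_gt0 al0 mc.
rewrite -(fineK (util_fin_num v0 mv)) lee_fin -/al /delta.
by nra.
Qed.

End Equilibrium.

Theorem mainTheorem7 (R : realType) (n : nat) (v : valuation R n)
  (X : prices R n -> {set 'I_n})
  (d : measure_display) (T : measurableType d) (P : probability T R)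
  (p : 'I_n -> T -> R) :
  nonneg_val v -> monotone_val v -> v finset.set0 = 0 -> submodular v ->
  decision_map v X ->
  mixed_NE P X p ->
  forall i : 'I_n,
    P [set t | p i t < marginal v [set i] (~: [set i])] = 0%E /\
    ((\int[P]_t (util X i (fun j => p j t))%:E = 0)%E ->
       P.-negligible [set t | 0 < marginal v [set i] (X (fun j => p j t))]).
Proof.
move=> v0 mv _ sv dm NE i; split; first exact: price_lt_marginal_eq0 dm NE i v0 mv sv.
exact: util_eq0_marginal_negligible dm NE i.
Qed.
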